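(* For a complex parameter $\mu$, let $S_n(z;\mu)$, $n\ge -1$, be defined by $S_{-1}=S_0=1$ and $$S_{n+1}S_{n-1}=-z\left[S_n\frac{\partial^2S_n}{\partial z^2}-\left(\frac{\partial S_n}{\partial z}\right)^2\right]-S_n\frac{\partial S_n}{\partial z}+(z+\mu)S_n^2,\qquad n\ge0.$$ Let $\phi_n=\phi_n(\mu)=S_n(0;\mu)$ and $\phi_n'=\frac{\partial S_n}{\partial z}(0;\mu)$. Then for all $n\ge 3$, $$\phi_{n+1}=\frac{\phi_n\phi_{n-1}}{\phi_{n-2}}\left(2\mu^2-2n^2+2n-1-\frac{\phi_n\phi_{n-3}}{\phi_{n-1}\phi_{n-2}}\right),$$ $$\phi_{n+1}'=-\frac{\phi_n\phi_{n+2}}{\phi_{n+1}}+\mu\,\phi_{n+1}.$$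
   Context: The $S_n(z;\mu)$ are the Umemura polynomials associated with the third Painlevé equation, regarded as functions of $z$ and the parameter $\mu$; the identities are identities of functions of $\mu$. Here $\phi_n'$ denotes the $z$-derivative evaluated at $z=0$, not a derivative with respect to $\mu$. *)

From HB Require Import structures.
From mathcomp Require Import all_boot all_order all_algebra.
From mathcomp Require Import complex.
From mathcomp Require Import reals.
Set Implicit Arguments. Unset Strict Implicit. Unset Printing Implicit Defensive.
Import Order.TTheory GRing.Theory Num.Theory.
Local Open Scope ring_scope.

(* The parameter field: rational functions in the formal parameter mu over
   the complex numbers C = R[i] (R a real-number type). *)
Definition Kmu (R : realType) := {fraction {poly R[i]}}.

Definition mu (R : realType) : Kmu R := tofrac ('X : {poly R[i]}).

(* Umemura recurrence, with the index shifted by one: S k stands for S_{k-1},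
   so S 0 = S_{-1}, S 1 = S_0, and the recurrence at n >= 0 reads
   S_{n+1} S_{n-1} = -z [S_n S_n'' - (S_n')^2] - S_n S_n' + (z + mu) S_n^2. *)
Definition umemura_seq (R : realType) (S : nat -> {poly Kmu R}) : Prop :=
  [/\ S 0%N = 1, S 1%N = 1 &
   forall n : nat,
     S n.+2 * S n =
       - 'X * (S n.+1 * (S n.+1)^`(2) - ((S n.+1)^`()) ^+ 2)
       - S n.+1 * (S n.+1)^`()
       + ('X + (mu R)%:P) * (S n.+1) ^+ 2].

Definition phi (R : realType) (S : nat -> {poly Kmu R}) (n : nat) : Kmu R :=
  (S n.+1).[0].
Definition dphi (R : realType) (S : nat -> {poly Kmu R}) (n : nat) : Kmu R :=
  ((S n.+1)^`()).[0].

From HB Require Import structures.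
From mathcomp Require Import all_boot all_order all_algebra.
From mathcomp Require Import complex.
From mathcomp Require Import reals.
From mathcomp Require Import ring.
Set Implicit Arguments. Unset Strict Implicit. Unset Printing Implicit Defensive.
Import Order.TTheory GRing.Theory Num.Theory.
Local Open Scope ring_scope.

(* The recurrence [S_(n+1) S_(n-1) = F(S_n)] propagates two Hirota bilinear
   identities, [D_z(S_(n+1).S_(n-1)) = (2n+1) S_n^2] and [D_z^2(S_(n+1).S_n) = 0].
   At z = 0, with [u_n = mu phi_n - phi'_n], the recurrence reads
   [phi_(n+1) phi_(n-1) = phi_n u_n] and the first identity turns into
   [u_n u_(n-1) = (mu^2 - n^2) phi_n phi_(n-1)]; eliminating u gives
   [phi_(n+1) phi_(n-2) = (mu^2 - n^2) phi_n phi_(n-1)], of which both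
   formulas are rearrangements.  Since mu is transcendental, no phi_n and no
   [mu^2 - n^2] vanishes, which keeps every division legitimate. *)

Section HirotaBilinear.

Variable K : idomainType.

Definition hirotaD (f g : {poly K}) : {poly K} := f^`() * g - f * g^`().

Definition hirotaD2 (f g : {poly K}) : {poly K} :=
  f^`()^`() * g - (f^`() * g^`()) *+ 2 + f * g^`()^`().

Lemma hirotaD2_next (g h k : {poly K}) (m : nat) :
  g != 0 -> hirotaD k g = h ^+ 2 *+ m -> hirotaD2 h g = 0 -> hirotaD2 k h = 0.
Proof.
move=> gn0 /eqP; rewrite -subr_eq0 => /eqP Wkg Hhg.
have dWkg := congr1 deriv Wkg; rewrite deriv0 in dWkg.
apply: (mulfI gn0); rewrite mulr0.
have -> : g * hirotaD2 k h =
    h * (hirotaD k g - h ^+ 2 *+ m)^`() - 2%:R * h^`() * (hirotaD k g - h ^+ 2 *+ m)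
    + k * hirotaD2 h g.
  rewrite /hirotaD /hirotaD2 !derivE; ring.
by rewrite dWkg Wkg Hhg; ring.
Qed.

Variable c : K.

Definition umemura_op (g : {poly K}) : {poly K} :=
  - 'X * (g * g^`()^`() - g^`() ^+ 2) - g * g^`() + ('X + c%:P) * g ^+ 2.

Lemma deriv_umemura_op (g : {poly K}) : (umemura_op g)^`() =
  - (2%:R * g * g^`()^`()) - 'X * (g * g^`()^`()^`() - g^`() * g^`()^`())
  + g * g + 2%:R * ('X + c%:P) * g * g^`().
Proof. rewrite /umemura_op !expr2 !derivE; ring. Qed.

Lemma hirotaD_umemura_next (f g h k : {poly K}) (m : nat) :
    g != 0 -> h * f = umemura_op g -> k * g = umemura_op h ->
    hirotaD h f = g ^+ 2 *+ m -> hirotaD2 h g = 0 ->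
  hirotaD k g = h ^+ 2 *+ m.+2.
Proof.
move=> gn0 /eqP + /eqP + /eqP + Hhg.
rewrite -subr_eq0 => /eqP Rf; rewrite -subr_eq0 => /eqP Rg.
rewrite -subr_eq0 => /eqP Wf.
have dRf := congr1 deriv Rf; have dRg := congr1 deriv Rg.
have dHhg := congr1 deriv Hhg; rewrite deriv0 in dRf dRg dHhg.
apply: (mulfI (expf_neq0 2 gn0)); apply/eqP; rewrite -subr_eq0; apply/eqP.
(* [g^2 (hirotaD k g - (m+2) h^2)] is a combination of the two recurrences,
   their derivatives, the induction hypotheses and the derivative of the
   Hirota equation. *)
have -> : g ^+ 2 * hirotaD k g - g ^+ 2 * (h ^+ 2 *+ m.+2) =
    - ((2%:R * g * h - 'X * g * h^`() - 'X * g^`() * h) * hirotaD2 h g)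
    - ('X * g * h) * (hirotaD2 h g)^`()
    + h ^+ 2 * (hirotaD h f - g ^+ 2 *+ m)
    - 2%:R * h * h^`() * (h * f - umemura_op g)
    + h ^+ 2 * (h * f - umemura_op g)^`()
    + g ^+ 2 * (k * g - umemura_op h)^`()
    - 2%:R * g * g^`() * (k * g - umemura_op h).
  rewrite !derivB !deriv_umemura_op /umemura_op /hirotaD /hirotaD2 !derivE; ring.
by rewrite dHhg Hhg dRf dRg Rf Rg Wf; ring.
Qed.

End HirotaBilinear.

Section UmemuraSequence.

Variables (K : fieldType) (c : K) (S : nat -> {poly K}).
Hypotheses (S0 : S 0 = 1) (S1 : S 1 = 1).
Hypothesis S_rec : forall n, S n.+2 * S n = umemura_op c (S n.+1).

Hypothesis pchar0 : [pchar K] =i pred0.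

Lemma umemura_hirota n : [/\ S n.+1 != 0,
  hirotaD (S n.+2) (S n) = S n.+1 ^+ 2 *+ (2 * n).+1 &
  hirotaD2 (S n.+2) (S n.+1) = 0].
Proof.
have d1 : (1 : {poly K})^`() = 0 by rewrite -polyC1 derivC.
elim: n => [|n [Sn0 W H]].
  have S2 : S 2 = 'X + c%:P.
    by rewrite -[S 2]mulr1 -S0 S_rec S1 /umemura_op d1 deriv0; ring.
  rewrite S0 S1 S2 /hirotaD /hirotaD2 d1 !derivE; split.
  - exact: oner_neq0.
  - ring.
  - ring.
have Sn1 : S n.+2 != 0.
  have : hirotaD (S n.+2) (S n) != 0.
    rewrite W -mulr_natr -polyC_natr mulf_neq0 ?expf_neq0 //.
    by rewrite polyC_eq0 ((pcharf0P K).1 pchar0).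
  by apply: contraNneq => ->; rewrite /hirotaD deriv0 !mul0r subrr.
have W' := hirotaD_umemura_next Sn0 (S_rec n) (S_rec n.+1) W H.
by rewrite mulnSr addn2; split => //; apply: hirotaD2_next Sn0 W' H.
Qed.

Local Notation a j := (S j).[0].
Local Notation b j := ((S j)^`()).[0].
Local Notation u j := (c * a j - b j).

Lemma umemura_rec_at0 n : a n.+2 * a n = a n.+1 * u n.+1.
Proof.
have := congr1 (horner^~ 0) (S_rec n).
rewrite /umemura_op /= !(hornerD, hornerN, hornerM, horner_exp, hornerX, hornerC).
by move=> ->; ring.
Qed.

Lemma hirotaD_at0 n : b n.+2 * a n - a n.+2 * b n = (2 * n).+1%:R * a n.+1 ^+ 2.
Proof.
have [_ W _] := umemura_hirota n.
have := congr1 (horner^~ 0) W.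
by rewrite /hirotaD /= !(hornerD, hornerN, hornerM, horner_exp, hornerMn) mulr_natl.
Qed.

Hypothesis c_sqr_neq_natr : forall m : nat, c ^+ 2 != m%:R ^+ 2.

Lemma umemura_u_prod_at0 n :
  [/\ a n != 0, a n.+1 != 0 & u n.+1 * u n = (c ^+ 2 - n%:R ^+ 2) * a n.+1 * a n].
Proof.
elim: n => [|n [an0 an1 U]].
  rewrite S0 S1 -polyC1 derivC hornerC horner0; split.
  - exact: oner_neq0.
  - exact: oner_neq0.
  - ring.
have un1 : u n.+1 != 0.
  have : u n.+1 * u n != 0 by rewrite U !mulf_neq0 // subr_eq0.
  by rewrite mulf_eq0 negb_or => /andP[].
have an2 : a n.+2 != 0.
  have : a n.+2 * a n != 0 by rewrite umemura_rec_at0 mulf_neq0.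
  by rewrite mulf_eq0 negb_or => /andP[].
split=> //; apply: (mulfI an0); apply/eqP; rewrite -subr_eq0; apply/eqP.
have -> : a n * (u n.+2 * u n.+1) - a n * ((c ^+ 2 - n.+1%:R ^+ 2) * a n.+2 * a n.+1) =
    - u n.+1 * (b n.+2 * a n - a n.+2 * b n - (2 * n).+1%:R * a n.+1 ^+ 2)
    + a n.+2 * (u n.+1 * u n - (c ^+ 2 - n%:R ^+ 2) * a n.+1 * a n)
    + (2 * n).+1%:R * a n.+1 * (a n.+2 * a n - a n.+1 * u n.+1).
  ring.
by rewrite hirotaD_at0 U umemura_rec_at0; ring.
Qed.

Lemma umemura_rec3_at0 p :
  a p.+3 * a p = (c ^+ 2 - p.+1%:R ^+ 2) * a p.+2 * a p.+1.
Proof.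
have [a1 a2 U] := umemura_u_prod_at0 p.+1.
apply: (mulfI (mulf_neq0 a1 a2)); apply/eqP; rewrite -subr_eq0; apply/eqP.
have -> : a p.+1 * a p.+2 * (a p.+3 * a p)
      - a p.+1 * a p.+2 * ((c ^+ 2 - p.+1%:R ^+ 2) * a p.+2 * a p.+1) =
    (a p.+3 * a p.+1 - a p.+2 * u p.+2) * (a p.+2 * a p)
    + a p.+2 * u p.+2 * (a p.+2 * a p - a p.+1 * u p.+1)
    + a p.+2 * a p.+1 * (u p.+2 * u p.+1 - (c ^+ 2 - p.+1%:R ^+ 2) * a p.+2 * a p.+1).
  ring.
by rewrite !umemura_rec_at0 U; ring.
Qed.

Lemma umemura_ratio_at0 p :
  a p.+4 * a p.+1 / (a p.+3 * a p.+2) = c ^+ 2 - p.+2%:R ^+ 2.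
Proof.
have [a2 a3 _] := umemura_u_prod_at0 p.+2.
by rewrite umemura_rec3_at0 -mulrA mulfK // mulf_neq0.
Qed.

Lemma umemura_succ_at0 p :
  a p.+4 = a p.+3 * a p.+2 / a p.+1 * (c ^+ 2 - p.+2%:R ^+ 2).
Proof.
have [a1 _ _] := umemura_u_prod_at0 p.+1.
by rewrite -[LHS](mulfK a1) umemura_rec3_at0; ring.
Qed.

Lemma umemura_deriv_at0 n : b n.+2 = - (a n.+1 * a n.+3 / a n.+2) + c * a n.+2.
Proof.
have [_ a2 _] := umemura_u_prod_at0 n.+1.
by rewrite [a n.+1 * _]mulrC umemura_rec_at0 mulrC mulKf //; ring.
Qed.

End UmemuraSequence.

Lemma pchar_Kmu (R : realType) : [pchar Kmu R] =i pred0.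
Proof.
apply/pcharf0P => n.
by rewrite -(rmorph_nat (@tofrac _)) tofrac_eq0 -polyC_natr polyC_eq0 pnatr_eq0.
Qed.

Lemma mu_sqr_neq_natr (R : realType) (m : nat) : mu R ^+ 2 != m%:R ^+ 2.
Proof.
rewrite -(rmorph_nat (@tofrac _)) -!tofracXn tofrac_eq.
apply/eqP => /(congr1 (size : {poly R[i]} -> nat)).
by rewrite size_polyXn -natrX -polyC_natr size_polyC; case: eqP.
Qed.

Theorem theorem4p1 (R : realType) (S : nat -> {poly Kmu R}) :
  umemura_seq S ->
  forall n : nat, (3 <= n)%N ->
    phi S n.+1 =
      phi S n * phi S (n - 1)%N / phi S (n - 2)%N *
        (2 * mu R ^+ 2 - 2 * (n%:R) ^+ 2 + 2 * n%:R - 1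
         - phi S n * phi S (n - 3)%N / (phi S (n - 1)%N * phi S (n - 2)%N))
    /\ dphi S n.+1 = - (phi S n * phi S n.+2 / phi S n.+1) + mu R * phi S n.+1.
Proof.
move=> [S0 S1 S_rec] n n_ge3.
have pchar0 := pchar_Kmu R; have mu_sqr := @mu_sqr_neq_natr R.
split; last exact: umemura_deriv_at0 S0 S1 S_rec pchar0 mu_sqr n.
case: n n_ge3 => [|[|[|m]]] // _.
rewrite /phi !subSS !subn0 (umemura_ratio_at0 S0 S1 S_rec pchar0 mu_sqr).
by rewrite (umemura_succ_at0 S0 S1 S_rec pchar0 mu_sqr); ring.
Qed.
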